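(* For every $q\in(0,1/2)$, the functions $L\mapsto T_{\rm rel}(L)$, $L\mapsto T_{\rm mix}(L)$ and $L\mapsto T_{\rm hit}(L)$ are non-decreasing on the positive integers.
   Context: Fix $q\in(0,1/2)$, $p=1-q$. For $\Lambda=\{1,\dots,L\}$ the East process is the Markov chain on $\{0,1\}^\Lambda$ with generator $\mathcal L f(\sigma)=\sum_{x}c_x(\sigma)[\pi_x(f)-f](\sigma)$, $c_1\equiv1$, $c_x(\sigma)=1-\sigma_{x-1}$ ($x\ge2$), $\pi_x(f)$ the average over $\sigma_x\sim$ Bernoulli$(p)$; $\pi$ is the product Bernoulli$(p)$ measure. $T_{\rm rel}(L)$ is the inverse spectral gap; $T_{\rm mix}(L)=\inf\{t:\max_\eta\|\mathbb P_\eta(\eta(t)\in\cdot)-\pi\|_{TV}\le1/4\}$; $T_{\rm hit}(L)=\mathbb E_{\mathbb 10}[\tau_{\eta_L=1}]$ where $\mathbb 10$ has $\sigma_x=1$ for $x<L$, $\sigma_L=0$, and $\tau_{\eta_L=1}$ is the hitting time of $\{\eta_L=1\}$. *)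

From Stdlib Require Import Reals List ClassicalEpsilon Arith.
Import ListNotations.
Open Scope R_scope.

Definition lsum {A : Type} (l : list A) (f : A -> R) : R :=
  fold_right (fun a s => f a + s) 0 l.

Definition is_lower_bound (E : R -> Prop) (m : R) : Prop :=
  forall x, E x -> m <= x.
Definition is_glb (E : R -> Prop) (m : R) : Prop :=
  is_lower_bound E m /\ forall b, is_lower_bound E b -> b <= m.

(** Infimum (chosen classically; meaningful when the glb exists). *)
Definition Rinf (E : R -> Prop) : R := epsilon (inhabits 0) (is_glb E).

(** Limit of a real sequence (chosen classically; meaningful when it converges). *)
Definition Lim (u : nat -> R) : R := epsilon (inhabits 0) (fun l => Un_cv u l).

(** * Configuration space {0,1}^{1..L}
    A configuration is a list of booleans of length L; site x (1 <= x <= L)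
    is stored at list index x-1, and sigma_x = 1 iff the entry is true. *)

Fixpoint configs (L : nat) : list (list bool) :=
  match L with
  | O => [ [] ]
  | S n => map (cons false) (configs n) ++ map (cons true) (configs n)
  end.

Definition spin (s : list bool) (i : nat) : bool := nth i s false.

Fixpoint upd (s : list bool) (i : nat) (b : bool) : list bool :=
  match s, i with
  | [], _ => []
  | _ :: t, O => b :: t
  | a :: t, S j => a :: upd t j b
  end.

Definition cfg_eqb (s t : list bool) : bool :=
  if list_eq_dec Bool.bool_dec s t then true else false.

Section East.
Variable q : R.
Definition p : R := 1 - q.

Definition bern (b : bool) : R := if b then p else q.

Definition piL (s : list bool) : R := fold_right (fun b r => bern b * r) 1 s.

Definition cons_rate (s : list bool) (i : nat) : R :=
  match i with
  | O => 1
  | S j => 1 - (if spin s j then 1 else 0)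
  end.

Definition Lgen (L : nat) (f : list bool -> R) (s : list bool) : R :=
  lsum (seq 0 L) (fun i =>
    cons_rate s i * (p * f (upd s i true) + q * f (upd s i false) - f s)).

Definition piE (L : nat) (f : list bool -> R) : R :=
  lsum (configs L) (fun s => piL s * f s).
Definition Var (L : nat) (f : list bool -> R) : R :=
  piE L (fun s => f s * f s) - piE L f * piE L f.
Definition Dir (L : nat) (f : list bool -> R) : R :=
  - piE L (fun s => f s * Lgen L f s).

Definition gap (L : nat) : R :=
  Rinf (fun g => exists f : list bool -> R, Var L f <> 0 /\ g = Dir L f / Var L f).
Definition Trel (L : nat) : R := / gap L.

Definition Qmat (L : nat) (s t : list bool) : R :=
  Lgen L (fun u => if cfg_eqb u t then 1 else 0) s.
Fixpoint Qpow (L : nat) (n : nat) (s t : list bool) : R :=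
  match n with
  | O => if cfg_eqb s t then 1 else 0
  | S m => lsum (configs L) (fun u => Qmat L s u * Qpow L m u t)
  end.

(** Transition probabilities P_eta(eta(t) = s) = (exp(t Q))(eta, s). *)
Definition Pt (L : nat) (t : R) (eta s : list bool) : R :=
  Lim (fun N => sum_f_R0 (fun n => t ^ n / INR (Factorial.fact n) * Qpow L n eta s) N).

Definition dTV (L : nat) (t : R) (eta : list bool) : R :=
  / 2 * lsum (configs L) (fun s => Rabs (Pt L t eta s - piL s)).

Definition Tmix (L : nat) : R :=
  Rinf (fun t => 0 <= t /\ forall eta, In eta (configs L) -> dTV L t eta <= / 4).

Definition one_zero (L : nat) : list bool := repeat true (L - 1) ++ [false].

Definition target (L : nat) (s : list bool) : Prop := spin s (L - 1) = true.

(** Expected hitting time of {eta_L = 1} from 1 0, as the minimal non-negative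
    solution h of  h = 0 on the target,  (Q h)(s) = -1 off the target. *)
Definition Thit (L : nat) : R :=
  Rinf (fun v => exists h : list bool -> R,
    (forall s, In s (configs L) -> 0 <= h s) /\
    (forall s, In s (configs L) -> target L s -> h s = 0) /\
    (forall s, In s (configs L) -> ~ target L s ->
        lsum (configs L) (fun u => Qmat L s u * h u) = -1) /\
    v = h (one_zero L)).

End East.

From Pilot Require Import Defs.
From Stdlib Require Import Reals List Arith Lra Lia ClassicalEpsilon.
From Coquelicot Require Import Coquelicot.
Import ListNotations.
Open Scope R_scope.

(* The East constraint points one way: sites 1..L never look at site L+1, so
   the first L sites of the process on {1..L+1} evolve as the process on
   {1..L}.  Hence
   - a test function of the first L sites has the same variance and Dirichlet
     form in both boxes, so gap(L+1) <= gap(L);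
   - forgetting site L+1 contracts total variation, so every time at which the
     larger chain is mixed works for the smaller one;
   - if h solves the hitting equations on L+1 sites, then s0 |-> h(s10),
     s1 |-> 0 is a supersolution on L sites; by the maximum principle it
     dominates the solution there, and at 1..10 it takes the value h(1..110).
   The infima defining T_rel and T_mix are over nonempty sets, bounded away
   from 0 for T_rel, thanks to a Poincare inequality proved by induction on L
   by conditioning on the first site; it also gives exponential decay of the
   variance of P_t g, hence a finite mixing time. *)

Section ListSum.
Context {A : Type}.
Implicit Types (l : list A) (f g : A -> R).

Lemma lsum_app l1 l2 f : lsum (l1 ++ l2) f = lsum l1 f + lsum l2 f.
Proof. induction l1; simpl; [ring | rewrite IHl1; ring]. Qed.

Lemma lsum_ext l f g : (forall a, In a l -> f a = g a) -> lsum l f = lsum l g.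
Proof.
  induction l; simpl; intros H; [reflexivity |].
  rewrite H, IHl by auto; reflexivity.
Qed.

Lemma lsum_plus l f g : lsum l (fun a => f a + g a) = lsum l f + lsum l g.
Proof. induction l; simpl; [ring | rewrite IHl; ring]. Qed.

Lemma lsum_minus l f g : lsum l (fun a => f a - g a) = lsum l f - lsum l g.
Proof. induction l; simpl; [ring | rewrite IHl; ring]. Qed.

Lemma lsum_opp l f : lsum l (fun a => - f a) = - lsum l f.
Proof. induction l; simpl; [ring | rewrite IHl; ring]. Qed.

Lemma lsum_scal l c f : lsum l (fun a => c * f a) = c * lsum l f.
Proof. induction l; simpl; [ring | rewrite IHl; ring]. Qed.

Lemma lsum_scalr l c f : lsum l (fun a => f a * c) = lsum l f * c.
Proof. induction l; simpl; [ring | rewrite IHl; ring]. Qed.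

Lemma lsum_const l c : lsum l (fun _ => c) = INR (length l) * c.
Proof. induction l; simpl lsum; simpl length; [simpl; ring | rewrite IHl, S_INR; ring]. Qed.

Lemma lsum_eq0 l f : (forall a, In a l -> f a = 0) -> lsum l f = 0.
Proof. induction l; simpl; intros H; [reflexivity |]. rewrite H, IHl by auto; ring. Qed.

Lemma lsum_le l f g : (forall a, In a l -> f a <= g a) -> lsum l f <= lsum l g.
Proof.
  induction l; simpl; intros H; [lra |].
  assert (f a <= g a) by auto. assert (lsum l f <= lsum l g) by auto. lra.
Qed.

Lemma lsum_ge0 l f : (forall a, In a l -> 0 <= f a) -> 0 <= lsum l f.
Proof.
  intros H. apply Rle_trans with (lsum l (fun _ => 0)); [rewrite lsum_eq0; auto; lra |].
  apply lsum_le; auto.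
Qed.

Lemma lsum_ge_term l f a : In a l -> (forall b, In b l -> 0 <= f b) -> f a <= lsum l f.
Proof.
  induction l as [|b l IH]; simpl; intros Ha H; [contradiction |].
  assert (0 <= lsum l f) by (apply lsum_ge0; auto).
  destruct Ha as [-> | Ha]; [lra |].
  assert (0 <= f b) by auto. assert (f a <= lsum l f) by auto. lra.
Qed.

Lemma lsum_abs_le l f : Rabs (lsum l f) <= lsum l (fun a => Rabs (f a)).
Proof.
  induction l; simpl; [rewrite Rabs_R0; lra |].
  eapply Rle_trans; [apply Rabs_triang | lra].
Qed.

Lemma list_argmin l f : l <> [] -> exists x, In x l /\ forall y, In y l -> f x <= f y.
Proof.
  induction l as [|a [|b l'] IH]; intros Hl; [congruence | |].
  - exists a. split; [left; auto | intros y [<- | []]; lra].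
  - destruct IH as [x [Hx Hm]]; [discriminate |].
    destruct (Rle_dec (f a) (f x)).
    + exists a. split; [left; auto |]. intros y [<- | Hy]; [lra | specialize (Hm y Hy); lra].
    + exists x. split; [right; auto |]. intros y [<- | Hy]; [lra | auto].
Qed.

End ListSum.

Lemma lsum_comm {A B : Type} (l : list A) (l' : list B) (F : A -> B -> R) :
  lsum l (fun a => lsum l' (F a)) = lsum l' (fun b => lsum l (fun a => F a b)).
Proof.
  induction l; simpl; [symmetry; apply lsum_eq0; auto |].
  rewrite IHl, <- lsum_plus; reflexivity.
Qed.

Lemma lsum_map {A B} (g : A -> B) l (f : B -> R) :
  lsum (map g l) f = lsum l (fun a => f (g a)).
Proof. induction l; simpl; [reflexivity | rewrite IHl; reflexivity]. Qed.

Lemma Un_cv_const c : Un_cv (fun _ => c) c.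
Proof. intros e He. exists O. intros. unfold Rdist. rewrite Rminus_diag, Rabs_R0. lra. Qed.

Lemma Un_cv_lsum {A} (l : list A) F G : (forall a, In a l -> Un_cv (fun n => F n a) (G a)) ->
  Un_cv (fun n => lsum l (F n)) (lsum l G).
Proof. induction l; simpl; intros H; [apply Un_cv_const | apply CV_plus; auto]. Qed.

Lemma Un_cv_ge u l a : Un_cv u l -> (forall n, a <= u n) -> a <= l.
Proof.
  intros H Ha. destruct (Rle_dec a l) as [|Hn]; auto.
  destruct (H (a - l)) as [N HN]; [lra |]. specialize (HN N (le_n N)). specialize (Ha N).
  unfold Rdist in HN. rewrite Rabs_right in HN by lra. lra.
Qed.

Lemma Lim_correct u : (exists l, Un_cv u l) -> Un_cv u (Defs.Lim u).
Proof. apply (epsilon_spec (inhabits 0) (fun l => Un_cv u l)). Qed.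

Lemma is_derive_lsum {A} (l : list A) (f : A -> R -> R) (df : A -> R) t :
  (forall a, In a l -> is_derive (f a) t (df a)) ->
  is_derive (fun tau => lsum l (fun a => f a tau)) t (lsum l df).
Proof.
  induction l as [|a l IH]; intros H; simpl.
  - apply (is_derive_const (V := R_NormedModule) 0 t).
  - apply (is_derive_plus (f a) (fun tau => lsum l (fun a => f a tau)));
      [apply H; left | apply IH; intros; apply H; right]; auto.
Qed.

Lemma is_derive_nonpos_antitone (f df : R -> R) :
  (forall x, is_derive f x (df x)) -> (forall x, df x <= 0) -> forall a b, a <= b -> f b <= f a.
Proof.
  intros Hd Hneg a b [Hab | <-]; [| lra].
  destruct (MVT_gen f a b df) as [c [_ Hc]].
  - intros x _. apply Hd.
  - intros x _. apply derivable_continuous_pt. eexists. apply is_derive_Reals, Hd.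
  - specialize (Hneg c). assert (df c * (b - a) <= 0) by (apply Rmult_le_0_r; lra). lra.
Qed.

Lemma PSeries_lsum {A} (l : list A) (c : A -> R) (b : A -> nat -> R) t :
  (forall u, In u l -> ex_pseries (b u) t) ->
  ex_pseries (fun k => lsum l (fun u => c u * b u k)) t /\
  PSeries (fun k => lsum l (fun u => c u * b u k)) t = lsum l (fun u => c u * PSeries (b u) t).
Proof.
  induction l as [|a l IH]; intros H.
  - split; [| apply PSeries_const_0]. apply ex_pseries_R. exists 0.
    apply is_series_Reals, (Un_cv_ext (fun _ => 0)); [| apply Un_cv_const].
    intros n. rewrite (sum_eq _ (fun _ => 0)), sum_cte by (intros; simpl; ring). ring.
  - destruct IH as [IH1 IH2]; [intros; apply H; right; auto |].
    assert (Ha : ex_pseries (PS_scal (c a) (b a)) t)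
      by (apply ex_pseries_scal; [apply Rmult_comm | apply H; left; auto]).
    split.
    + eapply ex_pseries_ext; [| apply (ex_pseries_plus _ _ _ Ha IH1)]. intros n. reflexivity.
    + simpl. rewrite <- IH2, <- PSeries_scal, <- PSeries_plus; auto.
Qed.

Lemma Rinf_glb (E : R -> Prop) :
  (exists x, E x) -> (exists m, is_lower_bound E m) -> is_glb E (Rinf E).
Proof.
  intros [x Hx] [m Hm]. apply (epsilon_spec (inhabits 0) (is_glb E)).
  destruct (completeness (fun y => E (- y))) as [l [Hl1 Hl2]].
  - exists (- m). intros y Hy. specialize (Hm _ Hy). lra.
  - exists (- x). rewrite Ropp_involutive. auto.
  - exists (- l). split.
    + intros y Hy. assert (- y <= l) by (apply Hl1; rewrite Ropp_involutive; auto). lra.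
    + intros b Hb. assert (l <= - b) by (apply Hl2; intros y Hy; specialize (Hb _ Hy); lra). lra.
Qed.

Lemma Rinf_le (E F : R -> Prop) :
  (exists x, E x) -> (exists m, is_lower_bound E m) -> (exists y, F y) ->
  (forall y, F y -> exists x, E x /\ x <= y) -> Rinf E <= Rinf F.
Proof.
  intros HE Hm [y Hy] HEF. destruct (Rinf_glb E HE Hm) as [HlbE _].
  assert (HlbF : is_lower_bound F (Rinf E)).
  { intros z Hz. destruct (HEF z Hz) as [x [Hx Hxz]]. specialize (HlbE x Hx). lra. }
  apply (Rinf_glb F (ex_intro _ y Hy) (ex_intro _ _ HlbF)), HlbF.
Qed.

Lemma In_configs L s : In s (configs L) <-> length s = L.
Proof.
  revert s; induction L; simpl; intros s.
  - split; [intros [<- | []]; reflexivity | destruct s; simpl; [auto | discriminate]].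
  - rewrite in_app_iff, !in_map_iff. split.
    + intros [[x [<- Hx]] | [x [<- Hx]]]; simpl; f_equal; apply IHL; auto.
    + destruct s as [|b s]; simpl; [discriminate |]. intros [= H].
      destruct b; [right | left]; exists s; split; auto; apply IHL; auto.
Qed.

Lemma configs_argmin L (d : list bool -> R) :
  exists s0, length s0 = L /\ forall v, length v = L -> d s0 <= d v.
Proof.
  destruct (list_argmin (configs L) d) as [s0 [Hs0 Hmin]].
  - intros H. assert (Hin : In (repeat false L) (configs L)) by apply In_configs, repeat_length.
    rewrite H in Hin. contradiction.
  - exists s0. split; [apply In_configs; auto |]. intros v Hv. apply Hmin, In_configs; auto.
Qed.

Lemma lsum_configs_cons L F : lsum (configs (S L)) F =
  lsum (configs L) (fun u => F (false :: u)) + lsum (configs L) (fun u => F (true :: u)).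
Proof. simpl. rewrite lsum_app, !lsum_map. reflexivity. Qed.

Lemma lsum_configs_snoc L F : lsum (configs (S L)) F =
  lsum (configs L) (fun u => F (u ++ [false]) + F (u ++ [true])).
Proof.
  revert F; induction L; intros F; [simpl; ring |].
  rewrite (lsum_configs_cons (S L)), (IHL (fun u => F (false :: u))),
    (IHL (fun u => F (true :: u))), (lsum_configs_cons L).
  reflexivity.
Qed.

Lemma cfg_eqb_spec s t : cfg_eqb s t = true <-> s = t.
Proof. unfold cfg_eqb. destruct (list_eq_dec Bool.bool_dec s t); split; congruence. Qed.

Lemma cfg_eqb_refl s : cfg_eqb s s = true.
Proof. apply cfg_eqb_spec; reflexivity. Qed.

Lemma cfg_eqb_neq s t : s <> t -> cfg_eqb s t = false.
Proof. intros H. destruct (cfg_eqb s t) eqn:E; auto. apply cfg_eqb_spec in E; contradiction. Qed.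

Definition delta (s t : list bool) : R := if cfg_eqb s t then 1 else 0.

Lemma delta_ge0 s t : 0 <= delta s t.
Proof. unfold delta; destruct (cfg_eqb s t); lra. Qed.

Lemma delta_cons b c x u : delta (b :: x) (c :: u) = if Bool.eqb b c then delta x u else 0.
Proof.
  unfold delta. destruct (cfg_eqb x u) eqn:E.
  - apply cfg_eqb_spec in E as ->. destruct b, c; simpl;
      rewrite ?cfg_eqb_refl, ?cfg_eqb_neq by discriminate; reflexivity.
  - rewrite cfg_eqb_neq; [destruct (Bool.eqb b c); reflexivity |].
    intros [= _ ->]. rewrite cfg_eqb_refl in E. discriminate.
Qed.

Lemma delta_snoc_marginal w u b :
  delta (w ++ [b]) (u ++ [false]) + delta (w ++ [b]) (u ++ [true]) = delta w u.
Proof.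
  unfold delta. destruct (cfg_eqb w u) eqn:E.
  - apply cfg_eqb_spec in E as ->.
    destruct b; rewrite cfg_eqb_refl, cfg_eqb_neq; try ring;
      intros H; apply app_inj_tail in H as [_ H]; discriminate.
  - assert (w <> u) by (intros ->; rewrite cfg_eqb_refl in E; discriminate).
    rewrite !cfg_eqb_neq; [ring | |]; intros H'; apply app_inj_tail in H' as [? _]; auto.
Qed.

Lemma lsum_configs_delta L x h : length x = L ->
  lsum (configs L) (fun u => delta x u * h u) = h x.
Proof.
  revert x h; induction L; intros [|b x] h Hx; try discriminate.
  - simpl. unfold delta. rewrite cfg_eqb_refl. ring.
  - injection Hx as Hx. rewrite lsum_configs_cons.
    destruct b.
    + rewrite lsum_eq0, Rplus_0_l by (intros; rewrite delta_cons; simpl; ring).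
      rewrite <- (IHL x (fun u => h (true :: u))) by auto.
      apply lsum_ext; intros u _. rewrite delta_cons. reflexivity.
    + rewrite (lsum_eq0 _ (fun u => _ * h (true :: u))), Rplus_0_r
        by (intros; rewrite delta_cons; simpl; ring).
      rewrite <- (IHL x (fun u => h (false :: u))) by auto.
      apply lsum_ext; intros u _. rewrite delta_cons. reflexivity.
Qed.

Lemma upd_length s i b : length (upd s i b) = length s.
Proof. revert i; induction s; intros [|i]; simpl; auto. Qed.

Lemma upd_upd s i b c : upd (upd s i b) i c = upd s i c.
Proof. revert i; induction s; intros [|i]; simpl; rewrite ?IHs; auto. Qed.

Lemma spin_upd_other s i j b : i <> j -> spin (upd s i b) j = spin s j.
Proof.
  unfold spin. revert i j; induction s; intros [|i] [|j] H; simpl; auto; try lia.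
Qed.

Lemma upd_snoc_lt s i b c : (i < length s)%nat -> upd (s ++ [c]) i b = upd s i b ++ [c].
Proof.
  revert i; induction s; intros [|i] H; simpl in *; try lia; auto.
  rewrite IHs by lia. reflexivity.
Qed.

Lemma upd_snoc_last s b c : upd (s ++ [c]) (length s) b = s ++ [b].
Proof. induction s; simpl; auto. rewrite IHs. reflexivity. Qed.

Lemma spin_snoc_lt s i c : (i < length s)%nat -> spin (s ++ [c]) i = spin s i.
Proof. intros H. unfold spin. apply app_nth1; auto. Qed.

Lemma spin_snoc_last s c : spin (s ++ [c]) (length s) = c.
Proof. unfold spin. rewrite app_nth2, Nat.sub_diag by lia. reflexivity. Qed.

Lemma firstn_snoc (u : list bool) b : firstn (length u) (u ++ [b]) = u.
Proof. induction u; simpl; auto. rewrite IHu; auto. Qed.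

Lemma snoc_decomp (u : list bool) L : length u = S L -> exists s b, u = s ++ [b] /\ length s = L.
Proof.
  intros H. destruct (exists_last (l := u)) as [s [b ->]]; [intros ->; discriminate |].
  exists s, b. split; auto. rewrite length_app in H. simpl in H. lia.
Qed.

Lemma cons_rate_upd s i b : cons_rate (upd s i b) i = cons_rate s i.
Proof. destruct i; simpl; auto. rewrite spin_upd_other by lia. reflexivity. Qed.

Lemma cons_rate_snoc s i c : (i < length s)%nat -> cons_rate (s ++ [c]) i = cons_rate s i.
Proof. destruct i; simpl; auto. intros H. rewrite spin_snoc_lt by lia. reflexivity. Qed.

Lemma cons_rate_snoc_last s b :
  cons_rate (s ++ [b]) (length s) = cons_rate (s ++ [false]) (length s).
Proof.
  destruct s as [|x s] using rev_ind; [reflexivity |].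
  rewrite length_app, Nat.add_1_r. cbn [cons_rate].
  rewrite !(spin_snoc_lt (s ++ [x])) by (rewrite length_app; simpl; lia). reflexivity.
Qed.

Lemma cons_rate_bounds s i : 0 <= cons_rate s i <= 1.
Proof. destruct i; simpl; [lra |]. destruct (spin s i); lra. Qed.

Section EastProcess.
Variable q : R.
Hypothesis q_pos : 0 < q.
Hypothesis q_lt_half : q < / 2.
Notation p := (Defs.p q).

Lemma p_pos : 0 < p.
Proof. unfold Defs.p. lra. Qed.

Lemma q_le_p : q <= p.
Proof. unfold Defs.p. lra. Qed.

Lemma piL_pos s : 0 < piL q s.
Proof.
  induction s as [|b s IH]; simpl; [lra |].
  apply Rmult_lt_0_compat; auto. destruct b; simpl; [apply p_pos | lra].
Qed.

Lemma piL_snoc s b : piL q (s ++ [b]) = piL q s * bern q b.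
Proof. induction s; simpl; [ring | rewrite IHs; ring]. Qed.

Lemma piL_ge_pow s : q ^ length s <= piL q s.
Proof.
  induction s as [|b s IH]; simpl; [lra |].
  assert (q <= bern q b) by (destruct b; simpl; pose proof q_le_p; lra).
  apply Rmult_le_compat; auto; [lra | apply pow_le; lra].
Qed.

Lemma piE_cons L G :
  piE q (S L) G = piE q L (fun u => q * G (false :: u) + p * G (true :: u)).
Proof.
  unfold piE. rewrite lsum_configs_cons, <- lsum_plus. apply lsum_ext; intros. simpl. ring.
Qed.

Lemma piE_snoc L G :
  piE q (S L) G = piE q L (fun u => q * G (u ++ [false]) + p * G (u ++ [true])).
Proof.
  unfold piE. rewrite lsum_configs_snoc. apply lsum_ext; intros. rewrite !piL_snoc. simpl. ring.
Qed.

Lemma piE_ext L f g : (forall s, length s = L -> f s = g s) -> piE q L f = piE q L g.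
Proof.
  intros H; unfold piE; apply lsum_ext; intros s Hs. rewrite H; auto. apply In_configs; auto.
Qed.

Lemma piE_plus L f g : piE q L (fun s => f s + g s) = piE q L f + piE q L g.
Proof. unfold piE. rewrite <- lsum_plus. apply lsum_ext; intros; ring. Qed.

Lemma piE_minus L f g : piE q L (fun s => f s - g s) = piE q L f - piE q L g.
Proof. unfold piE. rewrite <- lsum_minus. apply lsum_ext; intros; ring. Qed.

Lemma piE_scal L c f : piE q L (fun s => c * f s) = c * piE q L f.
Proof. unfold piE. rewrite <- lsum_scal. apply lsum_ext; intros; ring. Qed.

Lemma piE_opp L f : piE q L (fun s => - f s) = - piE q L f.
Proof. unfold piE. rewrite <- lsum_opp. apply lsum_ext; intros; ring. Qed.

Lemma piE_lsum {A} L (l : list A) F :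
  piE q L (fun s => lsum l (F s)) = lsum l (fun i => piE q L (fun s => F s i)).
Proof.
  unfold piE. rewrite <- lsum_comm. apply lsum_ext; intros. symmetry; apply lsum_scal.
Qed.

Lemma piE_le L f g : (forall s, length s = L -> f s <= g s) -> piE q L f <= piE q L g.
Proof.
  intros H; unfold piE; apply lsum_le; intros s Hs. apply In_configs in Hs.
  apply Rmult_le_compat_l; auto. left; apply piL_pos.
Qed.

Lemma piE_const L c : piE q L (fun _ => c) = c.
Proof.
  induction L; [unfold piE; simpl; ring |].
  rewrite piE_cons, (piE_ext L _ (fun _ => c)); auto. intros; unfold Defs.p; ring.
Qed.

Lemma piE_ge0 L f : (forall s, length s = L -> 0 <= f s) -> 0 <= piE q L f.
Proof. intros H. rewrite <- (piE_const L 0). apply piE_le; auto. Qed.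

Lemma piE_snoc_indep L G H : (forall u b, length u = L -> G (u ++ [b]) = H u) ->
  piE q (S L) G = piE q L H.
Proof.
  intros HG. rewrite piE_snoc. apply piE_ext. intros u Hu. rewrite !HG by auto.
  unfold Defs.p; ring.
Qed.

Lemma piE_resample L i h : (i < L)%nat ->
  piE q L h = piE q L (fun s => p * h (upd s i true) + q * h (upd s i false)).
Proof.
  revert i h; induction L; intros i h Hi; [lia |].
  rewrite !piE_cons. destruct i as [|i].
  - apply piE_ext; intros u _. simpl. unfold Defs.p; ring.
  - simpl. rewrite piE_plus, !piE_scal, (IHL i (fun u => h (false :: u))),
      (IHL i (fun u => h (true :: u))) by lia.
    rewrite <- !piE_scal, <- piE_plus. apply piE_ext; intros; ring.
Qed.

Lemma Lgen_ext L f g s : length s = L -> (forall u, length u = L -> f u = g u) ->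
  Lgen q L f s = Lgen q L g s.
Proof.
  intros Hs H. unfold Lgen. apply lsum_ext; intros i Hi. rewrite !H; rewrite ?upd_length; auto.
Qed.

Lemma Lgen_lin L a f g s : Lgen q L (fun u => a * f u + g u) s = a * Lgen q L f s + Lgen q L g s.
Proof. unfold Lgen. rewrite <- lsum_scal, <- lsum_plus. apply lsum_ext; intros; ring. Qed.

Lemma Lgen_scal L a f s : Lgen q L (fun u => a * f u) s = a * Lgen q L f s.
Proof. unfold Lgen. rewrite <- lsum_scal. apply lsum_ext; intros; ring. Qed.

Lemma Lgen_const L c s : Lgen q L (fun _ => c) s = 0.
Proof. unfold Lgen. apply lsum_eq0; intros. unfold Defs.p; ring. Qed.

Lemma Lgen_shift L c f s : Lgen q L (fun u => c + f u) s = Lgen q L f s.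
Proof. unfold Lgen. apply lsum_ext; intros. unfold Defs.p; ring. Qed.

Lemma Lgen_lsum {A} L (l : list A) (G : A -> list bool -> R) x :
  Lgen q L (fun u => lsum l (fun a => G a u)) x = lsum l (fun a => Lgen q L (G a) x).
Proof.
  unfold Lgen. rewrite lsum_comm. apply lsum_ext; intros i _.
  rewrite lsum_scal, lsum_minus, lsum_plus, !lsum_scal. reflexivity.
Qed.

Lemma Lgen_snoc L f s b : length s = L ->
  Lgen q (S L) f (s ++ [b]) = Lgen q L (fun u => f (u ++ [b])) s +
    cons_rate (s ++ [b]) L * (p * f (s ++ [true]) + q * f (s ++ [false]) - f (s ++ [b])).
Proof.
  intros Hs. unfold Lgen. rewrite seq_S, lsum_app. simpl. f_equal.
  - apply lsum_ext; intros i Hi. apply in_seq in Hi.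
    rewrite cons_rate_snoc, !upd_snoc_lt by lia. reflexivity.
  - subst L. rewrite !upd_snoc_last. ring.
Qed.

Lemma Lgen_snoc_split L (F : list bool -> bool -> R) s b : length s = L ->
  Lgen q (S L) (fun u => F (firstn L u) (spin u L)) (s ++ [b]) =
  Lgen q L (fun v => F v b) s + cons_rate (s ++ [b]) L * (p * F s true + q * F s false - F s b).
Proof.
  intros <-. rewrite Lgen_snoc, !firstn_snoc, !spin_snoc_last by reflexivity. f_equal.
  apply Lgen_ext; auto. intros v Hv. rewrite <- Hv, firstn_snoc, spin_snoc_last. reflexivity.
Qed.

Lemma Lgen_cv L h hl u : length u = L ->
  (forall v, length v = L -> Un_cv (fun n => h n v) (hl v)) ->
  Un_cv (fun n => Lgen q L (h n) u) (Lgen q L hl u).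
Proof.
  intros Hu H. apply Un_cv_lsum. intros i _. apply CV_mult; [apply Un_cv_const |].
  apply CV_minus; [apply CV_plus; apply CV_mult; try apply Un_cv_const |]; apply H;
    rewrite ?upd_length; auto.
Qed.

Lemma Qmat_apply L s h : length s = L ->
  lsum (configs L) (fun u => Qmat q L s u * h u) = Lgen q L h s.
Proof.
  intros Hs. unfold Qmat.
  rewrite (lsum_ext _ _ (fun u => Lgen q L (fun v => h u * delta v u) s))
    by (intros; rewrite Lgen_scal; unfold delta; ring).
  rewrite <- Lgen_lsum. apply Lgen_ext; auto. intros v Hv.
  rewrite <- (lsum_configs_delta L v h Hv). apply lsum_ext; intros; ring.
Qed.

Lemma Lgen_ge_at_min L d s : length s = L -> (forall v, length v = L -> d s <= d v) ->
  0 <= Lgen q L d s.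
Proof.
  intros Hs H. unfold Lgen. apply lsum_ge0. intros i _.
  pose proof (cons_rate_bounds s i). pose proof p_pos.
  pose proof (H (upd s i true)) as Hup. pose proof (H (upd s i false)) as Hdown.
  rewrite upd_length in Hup, Hdown. specialize (Hup Hs). specialize (Hdown Hs).
  apply Rmult_le_pos; [lra |].
  replace (p * d (upd s i true) + q * d (upd s i false) - d s)
    with (p * (d (upd s i true) - d s) + q * (d (upd s i false) - d s)) by (unfold Defs.p; ring).
  apply Rplus_le_le_0_compat; apply Rmult_le_pos; lra.
Qed.

Lemma piE_Lgen L f : piE q L (Lgen q L f) = 0.
Proof.
  unfold Lgen. rewrite piE_lsum. apply lsum_eq0. intros i Hi. apply in_seq in Hi.
  rewrite (piE_resample L i) by lia. rewrite <- (piE_const L 0). apply piE_ext. intros s _.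
  rewrite !upd_upd, !cons_rate_upd. unfold Defs.p; ring.
Qed.

(** * Variance, Dirichlet form and the Poincaré inequality *)

Definition Dloc L f i := piE q L (fun s =>
  cons_rate s i * (p * q) * (f (upd s i true) - f (upd s i false)) ^ 2).

Lemma Dir_local L f : Dir q L f = lsum (seq 0 L) (Dloc L f).
Proof.
  unfold Dir, Lgen.
  rewrite (piE_ext L _ (fun s => lsum (seq 0 L) (fun i => f s * (cons_rate s i *
    (p * f (upd s i true) + q * f (upd s i false) - f s))))) by (intros; symmetry; apply lsum_scal).
  rewrite piE_lsum, <- lsum_opp. apply lsum_ext; intros i Hi. apply in_seq in Hi.
  rewrite <- piE_opp, (piE_resample L i) by lia.
  unfold Dloc.
  apply piE_ext; intros s _. rewrite !upd_upd, !cons_rate_upd. unfold Defs.p. ring.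
Qed.

Lemma Dir_ge0 L f : 0 <= Dir q L f.
Proof.
  rewrite Dir_local. apply lsum_ge0. intros i _. apply piE_ge0. intros s _.
  pose proof (cons_rate_bounds s i). pose proof p_pos.
  apply Rmult_le_pos; [apply Rmult_le_pos; [lra | nra] | apply pow2_ge_0].
Qed.

Lemma Var_centered L f : Defs.Var q L f = piE q L (fun s => (f s - piE q L f) ^ 2).
Proof.
  unfold Defs.Var. set (m := piE q L f).
  rewrite (piE_ext L (fun s => (f s - m) ^ 2) (fun s => f s * f s + ((- 2 * m) * f s + m * m)))
    by (intros; ring).
  rewrite !piE_plus, piE_scal, piE_const. fold m. ring.
Qed.

Lemma Var_ext L f g : (forall s, length s = L -> f s = g s) -> Defs.Var q L f = Defs.Var q L g.
Proof. intros H. unfold Defs.Var. rewrite (piE_ext L f g), (piE_ext L (fun s => f s * f s)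
  (fun s => g s * g s)); auto. intros s Hs. rewrite H; auto. Qed.

Lemma Var_ge0 L f : 0 <= Defs.Var q L f.
Proof. rewrite Var_centered. apply piE_ge0. intros; apply pow2_ge_0. Qed.

Lemma Var_plus_le L f g :
  Defs.Var q L (fun s => f s + g s) <= 2 * Defs.Var q L f + 2 * Defs.Var q L g.
Proof.
  rewrite !Var_centered, piE_plus, <- !piE_scal.
  rewrite <- (piE_plus L (fun s => 2 * (f s - piE q L f) ^ 2)). apply piE_le. intros s _.
  set (a := f s - piE q L f). set (b := g s - piE q L g).
  replace (f s + g s - (piE q L f + piE q L g)) with (a + b) by (unfold a, b; ring).
  pose proof (pow2_ge_0 (a - b)). nra.
Qed.

Lemma Var_cons L f :
  let g0 u := f (false :: u) in let g1 u := f (true :: u) in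
  Defs.Var q (S L) f = q * Defs.Var q L g0 + p * Defs.Var q L g1
                       + p * q * (piE q L g1 - piE q L g0) ^ 2.
Proof. cbv zeta. unfold Defs.Var. rewrite !piE_cons, !piE_plus, !piE_scal. unfold Defs.p. ring. Qed.

(* Drop the constrained updates where the first site is 1; where it is 0 the
   remaining sites see exactly the East constraint on L sites. *)
Lemma Dir_cons_ge L f :
  let g0 u := f (false :: u) in let g1 u := f (true :: u) in
  p * q * piE q L (fun u => (g1 u - g0 u) ^ 2) + q * Dir q L g0 <= Dir q (S L) f.
Proof.
  intros g0 g1. rewrite !Dir_local. simpl seq. rewrite <- seq_shift. simpl lsum.
  rewrite lsum_map. apply Rplus_le_compat.
  - unfold Dloc. rewrite piE_cons, <- piE_scal. apply Req_le, piE_ext. intros u _.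
    simpl. unfold g0, g1, Defs.p. ring.
  - rewrite <- lsum_scal. apply lsum_le. intros j _. unfold Dloc.
    rewrite piE_cons, <- piE_scal. apply piE_le. intros u _.
    replace (cons_rate (false :: u) (S j)) with (cons_rate u j)
      by (destruct j; cbn; [ring | reflexivity]).
    pose proof (cons_rate_bounds (true :: u) (S j)). pose proof p_pos.
    assert (0 <= p * (cons_rate (true :: u) (S j) * (p * q) *
      (f (upd (true :: u) (S j) true) - f (upd (true :: u) (S j) false)) ^ 2)).
    { apply Rmult_le_pos; [lra |].
      apply Rmult_le_pos; [apply Rmult_le_pos; [lra | nra] | apply pow2_ge_0]. }
    simpl upd in *. unfold g0. lra.
Qed.

Lemma Var_cons_le L f :
  let g0 u := f (false :: u) in let g1 u := f (true :: u) in
  Defs.Var q (S L) f <= 3 * Defs.Var q L g0 + 3 * piE q L (fun u => (g1 u - g0 u) ^ 2).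
Proof.
  pose proof (Var_cons L f) as HV. cbv zeta in *.
  set (g0 := fun u => f (false :: u)) in *. set (g1 := fun u => f (true :: u)) in *.
  set (d := fun u => g1 u - g0 u).
  assert (Hd2 : piE q L (fun u => (g1 u - g0 u) ^ 2)
                = Defs.Var q L d + (piE q L g1 - piE q L g0) ^ 2).
  { unfold Defs.Var, d. rewrite piE_minus.
    rewrite (piE_ext L _ (fun u => (g1 u - g0 u) * (g1 u - g0 u))) by (intros; ring). ring. }
  assert (HV1 : Defs.Var q L g1 <= 2 * Defs.Var q L g0 + 2 * Defs.Var q L d).
  { rewrite <- (Var_plus_le L g0 d). apply Req_le, Var_ext. intros u _. unfold d. ring. }
  pose proof (Var_ge0 L g0). pose proof (Var_ge0 L g1). pose proof (Var_ge0 L d).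
  pose proof (pow2_ge_0 (piE q L g1 - piE q L g0)). set (M := (piE q L g1 - piE q L g0) ^ 2) in *.
  pose proof p_pos. pose proof q_le_p. assert (p <= 1) by (unfold Defs.p; lra).
  assert (q * Defs.Var q L g0 <= Defs.Var q L g0) by nra.
  assert (p * Defs.Var q L g1 <= Defs.Var q L g1) by nra.
  assert (p * q <= 1) by nra. assert (p * q * M <= M) by nra.
  rewrite HV, Hd2. lra.
Qed.

Lemma poincare L : exists C, 0 < C /\ forall f, Defs.Var q L f <= C * Dir q L f.
Proof.
  induction L as [|L [C [HC IH]]].
  { exists 1. split; [lra |]. intros f. unfold Defs.Var, Dir, Lgen, piE. simpl. lra. }
  pose proof p_pos. pose proof q_le_p.
  assert (0 < 3 * C / q) by (apply Rdiv_lt_0_compat; lra).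
  assert (0 < 3 / (p * q)) by (apply Rdiv_lt_0_compat; nra).
  exists (3 * C / q + 3 / (p * q)). split; [lra |].
  intros f. pose proof (Var_cons_le L f) as HV. pose proof (Dir_cons_ge L f) as HD.
  cbv zeta in HV, HD.
  set (g0 := fun u => f (false :: u)) in *.
  set (E2 := piE q L (fun u => (f (true :: u) - g0 u) ^ 2)) in *.
  assert (0 <= E2) by (apply piE_ge0; intros; apply pow2_ge_0).
  pose proof (IH g0). pose proof (Dir_ge0 L g0).
  set (a := q * Dir q L g0) in *. set (b := p * q * E2) in *.
  assert (3 * Defs.Var q L g0 <= 3 * C / q * a).
  { unfold a. replace (3 * C / q * (q * Dir q L g0)) with (3 * (C * Dir q L g0)) by (field; lra).
    lra. }
  assert (3 * E2 = 3 / (p * q) * b) by (unfold b; field; lra).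
  assert (0 <= a) by (unfold a; nra).
  assert (0 <= b) by (unfold b; apply Rmult_le_pos; [nra | lra]).
  nra.
Qed.

(** * Relaxation time *)

Lemma Var_snoc_indep L f : Defs.Var q (S L) (fun s => f (firstn L s)) = Defs.Var q L f.
Proof.
  unfold Defs.Var.
  rewrite (piE_snoc_indep L _ (fun u => f u * f u)), (piE_snoc_indep L _ f); [reflexivity | |];
    intros u b <-; rewrite firstn_snoc; reflexivity.
Qed.

Lemma Dir_snoc_indep L f : Dir q (S L) (fun s => f (firstn L s)) = Dir q L f.
Proof.
  unfold Dir. f_equal. apply piE_snoc_indep. intros u b Hu.
  rewrite Lgen_snoc by auto. subst L. rewrite !firstn_snoc.
  rewrite (Lgen_ext (length u) _ f) by (auto; intros v <-; rewrite firstn_snoc; reflexivity).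
  unfold Defs.p. ring.
Qed.

Definition gap_ratios L : R -> Prop :=
  fun g => exists f : list bool -> R, Defs.Var q L f <> 0 /\ g = Dir q L f / Defs.Var q L f.

Lemma gap_ratios_lower_bound L : exists c, 0 < c /\ is_lower_bound (gap_ratios L) c.
Proof.
  destruct (poincare L) as [C [HC H]]. exists (/ C). split; [apply Rinv_0_lt_compat; auto |].
  intros g [f [Hv ->]]. pose proof (Var_ge0 L f). specialize (H f).
  apply (Rmult_le_reg_r (Defs.Var q L f)); [lra |].
  unfold Rdiv. rewrite Rmult_assoc, Rinv_l, Rmult_1_r by lra.
  apply (Rmult_le_reg_l C); auto. rewrite <- Rmult_assoc, Rinv_r by lra. lra.
Qed.

Lemma gap_ratios_inhabited L : (1 <= L)%nat -> exists g, gap_ratios L g.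
Proof.
  intros HL. destruct L as [|L]; [lia |].
  set (f := fun s : list bool => if spin s 0 then 1 else 0).
  assert (Hv : Defs.Var q (S L) f = p * q).
  { unfold Defs.Var. rewrite !piE_cons. unfold f, spin. simpl.
    rewrite !piE_const. unfold Defs.p. ring. }
  exists (Dir q (S L) f / Defs.Var q (S L) f), f. split; auto.
  rewrite Hv. pose proof p_pos. nra.
Qed.

Lemma gap_ratios_snoc L g : gap_ratios L g -> gap_ratios (S L) g.
Proof.
  intros [f [Hv ->]]. exists (fun s => f (firstn L s)).
  rewrite Var_snoc_indep, Dir_snoc_indep. auto.
Qed.

Lemma Trel_le_succ L : (1 <= L)%nat -> Trel q L <= Trel q (S L).
Proof.
  intros HL. unfold Trel, gap. fold (gap_ratios L) (gap_ratios (S L)).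
  destruct (gap_ratios_lower_bound (S L)) as [c [Hc Hlb]].
  assert (Hinh : exists g, gap_ratios (S L) g) by (apply gap_ratios_inhabited; lia).
  assert (Hc' : c <= Rinf (gap_ratios (S L))) by (apply Rinf_glb; eauto).
  assert (Rinf (gap_ratios (S L)) <= Rinf (gap_ratios L)).
  { apply Rinf_le; eauto using gap_ratios_inhabited.
    intros g Hg. exists g. split; [apply gap_ratios_snoc | lra]; auto. }
  apply Rinv_le_contravar; lra.
Qed.

(** * Hitting time *)

Lemma Lgen_ge_neg L d u : length u = L -> (forall v, length v = L -> 0 <= d v) ->
  - INR L * d u <= Lgen q L d u.
Proof.
  intros Hu Hd. unfold Lgen.
  replace (- INR L * d u) with (lsum (seq 0 L) (fun _ => - d u))
    by (rewrite lsum_const, length_seq; ring).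
  apply lsum_le. intros i _. pose proof (cons_rate_bounds u i). pose proof p_pos.
  pose proof (Hd u Hu).
  pose proof (Hd (upd u i true)) as Hup. pose proof (Hd (upd u i false)) as Hdown.
  rewrite upd_length in Hup, Hdown. specialize (Hup Hu). specialize (Hdown Hu).
  assert (0 <= cons_rate u i * (p * d (upd u i true) + q * d (upd u i false))).
  { apply Rmult_le_pos; [lra |]. apply Rplus_le_le_0_compat; apply Rmult_le_pos; lra. }
  assert (cons_rate u i * d u <= d u) by nra.
  nra.
Qed.

(* k(s) bounds the expected time, started from s, until an exponential clock of
   rate kappa rings, the clock running only while site M+1 is unconstrained.
   Induction on M: with site M+1 equal to 1 the clock is the one of site M+2 at
   rate q; with site M+1 equal to 0 the clock rings at rate kappa. *)
Lemma killed_supersolution M kappa : 0 < kappa -> exists k : list bool -> R,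
  (forall s, length s = M -> 0 <= k s) /\
  (forall s, length s = M -> Lgen q M k s - kappa * cons_rate (s ++ [false]) M * k s <= -1).
Proof.
  revert kappa; induction M; intros kappa Hk.
  { exists (fun _ => / kappa). split; [intros; left; apply Rinv_0_lt_compat; auto |].
    intros s Hs. destruct s; [|discriminate]. unfold Lgen. simpl. field_simplify; lra. }
  destruct (IHM q q_pos) as [k' [Hk'0 Hk'1]]. pose proof p_pos.
  set (B := lsum (configs M) k').
  assert (HB : forall s, length s = M -> k' s <= B).
  { intros s Hs. apply lsum_ge_term; [apply In_configs; auto |].
    intros b Hb; apply Hk'0, In_configs; auto. }
  assert (HB0 : 0 <= B) by (apply lsum_ge0; intros; apply Hk'0, In_configs; auto).
  set (alpha := (1 + p * B) / kappa).
  set (F := fun (s : list bool) (b : bool) => alpha + (if b then k' s else 0)).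
  exists (fun u => F (firstn M u) (spin u M)). split.
  { intros u Hu. assert (0 <= alpha) by (apply Rdiv_le_0_compat; nra).
    assert (0 <= k' (firstn M u)) by (apply Hk'0; rewrite length_firstn; lia).
    unfold F. destruct (spin u M); lra. }
  intros u Hu. destruct (snoc_decomp u M Hu) as [s [b [-> Hs]]].
  rewrite Lgen_snoc_split by auto. subst M. rewrite cons_rate_snoc_last.
  replace (cons_rate ((s ++ [b]) ++ [false]) (S (length s))) with (if b then 0 else 1)
    by (cbn [cons_rate]; rewrite spin_snoc_lt, spin_snoc_last by (rewrite length_app; simpl; lia);
        destruct b; ring).
  rewrite firstn_snoc, spin_snoc_last.
  pose proof (cons_rate_bounds (s ++ [false]) (length s)).
  set (c := cons_rate (s ++ [false]) (length s)) in *.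
  pose proof (Hk'0 s eq_refl). pose proof (HB s eq_refl). unfold F.
  destruct b.
  - specialize (Hk'1 s eq_refl). fold c in Hk'1.
    rewrite Lgen_shift. unfold Defs.p in *. lra.
  - rewrite (Lgen_const _ (alpha + 0)).
    assert (kappa * alpha = 1 + p * B) by (unfold alpha; field; lra).
    assert (c * k' s <= k' s) by nra.
    assert (p * (c * k' s) <= p * B) by (apply Rmult_le_compat_l; lra).
    unfold Defs.p in *. nra.
Qed.

Section Hitting.
Variable M : nat.

(* On S M sites the target {eta_(M+1) = 1} is [spin u M = true]. *)
Definition hit_solution (h : list bool -> R) :=
  (forall u, length u = S M -> 0 <= h u) /\
  (forall u, length u = S M -> spin u M = true -> h u = 0) /\
  (forall u, length u = S M -> spin u M = false -> Lgen q (S M) h u = -1).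

Definition hit_supersolution (g : list bool -> R) :=
  (forall u, length u = S M -> 0 <= g u) /\
  (forall u, length u = S M -> spin u M = false -> Lgen q (S M) g u <= -1).

(* (1 + eps) g - h attains its minimum somewhere; off the target, Lgen of it is
   <= -eps < 0 there, which is impossible at a minimum. *)
Lemma hit_solution_le_scaled h g eps : hit_solution h -> hit_supersolution g -> 0 < eps ->
  forall u, length u = S M -> h u <= (1 + eps) * g u.
Proof.
  intros [_ [Hh0 Hh1]] [Hg0 Hg1] He.
  set (d := fun v => (1 + eps) * g v + -1 * h v).
  destruct (configs_argmin (S M) d) as [s0 [Hs0 Hmin]].
  assert (Hd0 : 0 <= d s0).
  { destruct (spin s0 M) eqn:E.
    - unfold d. rewrite Hh0 by auto. pose proof (Hg0 s0 Hs0). nra.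
    - pose proof (Lgen_ge_at_min (S M) d s0 Hs0 Hmin) as Hmin0.
      unfold d in Hmin0. rewrite Lgen_lin, Lgen_scal, Hh1 in Hmin0 by auto.
      specialize (Hg1 s0 Hs0 E). apply Rnot_lt_le. intros Hneg. nra. }
  intros u Hu. specialize (Hmin u Hu). unfold d in *. lra.
Qed.

Lemma hit_solution_le h g : hit_solution h -> hit_supersolution g ->
  forall u, length u = S M -> h u <= g u.
Proof.
  intros Hh Hg u Hu. pose proof (proj1 Hg u Hu). apply Rle_plus_epsilon. intros e He.
  assert (He' : 0 < e / (g u + 1)) by (apply Rdiv_lt_0_compat; lra).
  pose proof (hit_solution_le_scaled h g _ Hh Hg He' u Hu).
  assert (e / (g u + 1) * g u <= e).
  { apply (Rmult_le_reg_r (g u + 1)); [lra |]. field_simplify; nra. }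
  nra.
Qed.

(* Value iteration with time step 1/(S M + 1), smaller than the inverse of the
   maximal total jump rate S M; this is what makes [relax] monotone. *)
Definition relax (h : list bool -> R) u :=
  if spin u M then 0 else h u + (1 + Lgen q (S M) h u) / (INR (S M) + 1).

Fixpoint hit_iter n : list bool -> R :=
  match n with O => fun _ => 0 | S n => relax (hit_iter n) end.

Lemma relax_mono h1 h2 : (forall v, length v = S M -> h1 v <= h2 v) ->
  forall u, length u = S M -> relax h1 u <= relax h2 u.
Proof.
  intros H u Hu. unfold relax. destruct (spin u M); [lra |].
  set (d := fun v => -1 * h1 v + h2 v).
  assert (Hd : forall v, length v = S M -> 0 <= d v)
    by (intros v Hv; specialize (H v Hv); unfold d; lra).
  pose proof (Lgen_ge_neg (S M) d u Hu Hd) as Hlow. unfold d in Hlow.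
  rewrite Lgen_lin in Hlow. specialize (H u Hu).
  pose proof (pos_INR (S M)).
  assert (Hstep : (1 + Lgen q (S M) h2 u) / (INR (S M) + 1)
                  - (1 + Lgen q (S M) h1 u) / (INR (S M) + 1)
                  >= - (h2 u - h1 u)).
  { unfold Rdiv. rewrite <- Rmult_minus_distr_r.
    apply Rle_ge, (Rmult_le_reg_r (INR (S M) + 1)); [lra |].
    rewrite Rmult_assoc, Rinv_l by lra. nra. }
  lra.
Qed.

Lemma relax_le_supersolution g : hit_supersolution g ->
  forall u, length u = S M -> relax g u <= g u.
Proof.
  intros [Hg0 Hg1] u Hu. unfold relax. destruct (spin u M) eqn:E; [auto |].
  specialize (Hg1 u Hu E). pose proof (pos_INR (S M)).
  assert ((1 + Lgen q (S M) g u) / (INR (S M) + 1) <= 0)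
    by (apply Rmult_le_0_r; [lra | left; apply Rinv_0_lt_compat; lra]).
  lra.
Qed.

Lemma hit_iter_le_supersolution g : hit_supersolution g ->
  forall n u, length u = S M -> hit_iter n u <= g u.
Proof.
  intros Hg n. induction n; intros u Hu; simpl; [apply Hg; auto |].
  eapply Rle_trans; [apply relax_mono; eauto | apply relax_le_supersolution; auto].
Qed.

Lemma hit_iter_incr n u : length u = S M -> hit_iter n u <= hit_iter (S n) u.
Proof.
  revert u; induction n; intros u Hu.
  - simpl. unfold relax. destruct (spin u M); [lra |]. rewrite Lgen_const.
    pose proof (pos_INR (S M)).
    assert (0 <= (1 + 0) / (INR (S M) + 1)) by (apply Rdiv_le_0_compat; lra). lra.
  - apply relax_mono; auto.
Qed.

Lemma hit_iter_ge0 n u : length u = S M -> 0 <= hit_iter n u.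
Proof.
  intros Hu. induction n; simpl; [lra |].
  pose proof (hit_iter_incr n u Hu). simpl in H. lra.
Qed.

Lemma hit_supersolution_exists : exists g, hit_supersolution g.
Proof.
  destruct (killed_supersolution M p p_pos) as [k [Hk0 Hk1]].
  exists (fun u => if spin u M then 0 else k (firstn M u)). split.
  - intros u Hu. destruct (spin u M); [lra |]. apply Hk0. rewrite length_firstn. lia.
  - intros u Hu Ht. destruct (snoc_decomp u M Hu) as [s [b [-> Hs]]].
    subst M. rewrite spin_snoc_last in Ht. subst b.
    rewrite (Lgen_snoc_split _ (fun v b => if b then 0 else k v)) by reflexivity.
    change (fun v => k v) with k. specialize (Hk1 s eq_refl). unfold Defs.p in *. lra.
Qed.

Definition hit_limit u := Defs.Lim (fun n => hit_iter n u).

Lemma hit_iter_cv u : length u = S M -> Un_cv (fun n => hit_iter n u) (hit_limit u).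
Proof.
  intros Hu. apply Lim_correct. destruct hit_supersolution_exists as [g Hg].
  destruct (growing_cv (fun n => hit_iter n u)) as [l Hl].
  - intros n. apply hit_iter_incr; auto.
  - exists (g u). intros x [n ->]. apply hit_iter_le_supersolution; auto.
  - exists l; auto.
Qed.

Lemma relax_cv h hl u : length u = S M ->
  (forall v, length v = S M -> Un_cv (fun n => h n v) (hl v)) ->
  Un_cv (fun n => relax (h n) u) (relax hl u).
Proof.
  intros Hu H. unfold relax. destruct (spin u M); [apply Un_cv_const |].
  apply CV_plus; [auto |]. apply CV_mult; [| apply Un_cv_const].
  apply CV_plus; [apply Un_cv_const | apply Lgen_cv; auto].
Qed.

Lemma hit_limit_solution : hit_solution hit_limit.
Proof.
  assert (Hfix : forall u, length u = S M -> relax hit_limit u = hit_limit u).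
  { intros u Hu. apply (UL_sequence (fun n => hit_iter (n + 1) u)).
    - apply (Un_cv_ext (fun n => relax (hit_iter n) u)).
      + intros n. rewrite Nat.add_1_r. reflexivity.
      + apply relax_cv; auto. apply hit_iter_cv.
    - apply (CV_shift' (fun n => hit_iter n u) 1), hit_iter_cv; auto. }
  split; [| split].
  - intros u Hu. apply (Un_cv_ge _ _ 0 (hit_iter_cv u Hu)). intros; apply hit_iter_ge0; auto.
  - intros u Hu Ht. rewrite <- Hfix by auto. unfold relax. rewrite Ht. reflexivity.
  - intros u Hu Ht. specialize (Hfix u Hu). unfold relax in Hfix. rewrite Ht in Hfix.
    pose proof (pos_INR (S M)).
    assert (Hz : (1 + Lgen q (S M) hit_limit u) / (INR (S M) + 1) = 0) by lra.
    apply Rmult_integral in Hz as [Hz | Hz]; [lra |].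
    exfalso. revert Hz. apply Rinv_neq_0_compat. lra.
Qed.

End Hitting.

Definition hit_values L : R -> Prop := fun v => exists h : list bool -> R,
  (forall s, In s (configs L) -> 0 <= h s) /\
  (forall s, In s (configs L) -> target L s -> h s = 0) /\
  (forall s, In s (configs L) -> ~ target L s ->
     lsum (configs L) (fun u => Qmat q L s u * h u) = -1) /\
  v = h (one_zero L).

Lemma hit_values_iff M v :
  hit_values (S M) v <-> exists h, hit_solution M h /\ v = h (one_zero (S M)).
Proof.
  unfold hit_values, hit_solution, target. replace (S M - 1)%nat with M by lia.
  split.
  - intros [h [H0 [H1 [H2 ->]]]]. exists h. repeat split; auto.
    + intros u Hu. apply H0, In_configs; auto.
    + intros u Hu. apply H1, In_configs; auto.
    + intros u Hu Ht. rewrite <- Qmat_apply by auto.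
      apply H2; [apply In_configs; auto | congruence].
  - intros [h [[H0 [H1 H2]] ->]]. exists h. repeat split; auto.
    + intros u Hu. apply H0, In_configs; auto.
    + intros u Hu. apply H1, In_configs; auto.
    + intros u Hu Ht. apply In_configs in Hu. rewrite Qmat_apply by auto.
      apply H2; auto. destruct (spin u M); congruence.
Qed.

(* g(s0) := h(s10) and g(s1) := 0.  Site M+2 is blocked at s10, so the
   equation of h there differs from Lgen g (s0) only in the flip of site M+1:
   Lgen g (s0) = -1 - c q h(s00) - c (p - q) h(s10), which is where q <= p is
   used. *)
Lemma hit_solution_snoc M h : hit_solution (S M) h ->
  hit_supersolution M (fun u => if spin u M then 0 else h ((firstn M u ++ [true]) ++ [false])).
Proof.
  intros [Hh0 [_ Hh1]].
  assert (Hlen : forall (s : list bool) b c, length s = M -> length ((s ++ [b]) ++ [c]) = S (S M))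
    by (intros; rewrite !length_app; simpl; lia).
  split.
  - intros u Hu. destruct (spin u M); [lra |]. apply Hh0, Hlen. rewrite length_firstn. lia.
  - intros u Hu Ht. destruct (snoc_decomp u M Hu) as [s [b [-> Hs]]].
    subst M. rewrite spin_snoc_last in Ht. subst b.
    rewrite (Lgen_snoc_split _ (fun v b => if b then 0 else h ((v ++ [true]) ++ [false])))
      by reflexivity.
    assert (Hx : spin ((s ++ [true]) ++ [false]) (S (length s)) = false).
    { replace (S (length s)) with (length (s ++ [true])) by (rewrite length_app; simpl; lia).
      apply spin_snoc_last. }
    specialize (Hh1 _ (Hlen s true false eq_refl) Hx).
    rewrite Lgen_snoc, Lgen_snoc in Hh1 by (rewrite ?length_app; simpl; lia).
    replace (cons_rate ((s ++ [true]) ++ [false]) (S (length s))) with 0 in Hh1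
      by (cbn [cons_rate];
          rewrite spin_snoc_lt, spin_snoc_last by (rewrite length_app; simpl; lia); ring).
    rewrite cons_rate_snoc_last in Hh1.
    pose proof (cons_rate_bounds (s ++ [false]) (length s)). pose proof q_le_p.
    pose proof (Hh0 _ (Hlen s true false eq_refl)). pose proof (Hh0 _ (Hlen s false false eq_refl)).
    set (c := cons_rate (s ++ [false]) (length s)) in *.
    set (X := h ((s ++ [true]) ++ [false])) in *. set (Y := h ((s ++ [false]) ++ [false])) in *.
    assert (0 <= c * (p - q) * X) by (apply Rmult_le_pos; [apply Rmult_le_pos |]; lra).
    assert (0 <= c * q * Y) by (apply Rmult_le_pos; [apply Rmult_le_pos |]; lra).
    unfold Defs.p in *. nra.
Qed.

Lemma hit_solution_le_snoc M h k : hit_solution (S M) h -> hit_solution M k ->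
  forall s, length s = M -> k (s ++ [false]) <= h ((s ++ [true]) ++ [false]).
Proof.
  intros Hh Hk s Hs.
  pose proof (hit_solution_le M k _ Hk (hit_solution_snoc M h Hh) (s ++ [false])) as Hle.
  subst M. rewrite spin_snoc_last, firstn_snoc in Hle. apply Hle.
  rewrite length_app. simpl. lia.
Qed.

Lemma one_zero_S M : one_zero (S M) = repeat true M ++ [false].
Proof. unfold one_zero. replace (S M - 1)%nat with M by lia. reflexivity. Qed.

Lemma Thit_le_succ L : (1 <= L)%nat -> Thit q L <= Thit q (S L).
Proof.
  intros HL. destruct L as [|M]; [lia |].
  unfold Thit. fold (hit_values (S M)) (hit_values (S (S M))).
  assert (Hinh : forall M, exists v, hit_values (S M) v).
  { intros M'. exists (hit_limit M' (one_zero (S M'))).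
    apply hit_values_iff. exists (hit_limit M'). split; auto using hit_limit_solution. }
  apply Rinf_le; auto.
  - exists 0. intros v [h [H0 [_ [_ ->]]]]. apply H0, In_configs.
    rewrite one_zero_S, length_app, repeat_length. simpl. lia.
  - intros v Hv. destruct (Hinh M) as [w Hw]. exists w. split; auto.
    apply hit_values_iff in Hv as [h [Hh ->]]. apply hit_values_iff in Hw as [k [Hk ->]].
    rewrite !one_zero_S. change (repeat true (S M)) with (true :: repeat true M).
    rewrite repeat_cons.
    apply (hit_solution_le_snoc M); auto. apply repeat_length.
Qed.

(** * The semigroup exp(t Q) *)

Lemma Qmat_row_abs_le L x : length x = L ->
  lsum (configs L) (fun u => Rabs (Qmat q L x u)) <= 2 * INR L.
Proof.
  intros Hx. pose proof p_pos.
  apply Rle_trans with (lsum (configs L) (fun u => lsum (seq 0 L) (fun i =>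
    p * delta (upd x i true) u + q * delta (upd x i false) u + delta x u))).
  - apply lsum_le. intros u _. unfold Qmat, Lgen. eapply Rle_trans; [apply lsum_abs_le |].
    apply lsum_le. intros i _. pose proof (cons_rate_bounds x i).
    pose proof (delta_ge0 (upd x i true) u). pose proof (delta_ge0 (upd x i false) u).
    pose proof (delta_ge0 x u). fold (delta (upd x i true) u) (delta (upd x i false) u) (delta x u).
    rewrite Rabs_mult, (Rabs_right (cons_rate x i)) by lra.
    assert (Rabs (p * delta (upd x i true) u + q * delta (upd x i false) u - delta x u)
            <= p * delta (upd x i true) u + q * delta (upd x i false) u + delta x u)
      by (apply Rabs_le; split; nra).
    pose proof (Rabs_pos (p * delta (upd x i true) u + q * delta (upd x i false) u - delta x u)).
    nra.
  - rewrite lsum_comm, (lsum_ext _ _ (fun _ => 2)), lsum_const, length_seq; [lra |].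
    intros i _. rewrite !lsum_plus, !lsum_scal.
    rewrite !(lsum_ext (configs L) (fun u => delta _ u) (fun u => delta _ u * 1)) by (intros; ring).
    rewrite !lsum_configs_delta; rewrite ?upd_length; auto. unfold Defs.p; ring.
Qed.

Lemma Qpow_abs_le L n x s : length x = L -> Rabs (Qpow q L n x s) <= (2 * INR L + 1) ^ n.
Proof.
  revert x; induction n; intros x Hx; simpl.
  - destruct (cfg_eqb x s); rewrite ?Rabs_R1, ?Rabs_R0; lra.
  - eapply Rle_trans; [apply lsum_abs_le |].
    apply Rle_trans with (lsum (configs L) (fun u => Rabs (Qmat q L x u) * (2 * INR L + 1) ^ n)).
    + apply lsum_le. intros u Hu. rewrite Rabs_mult. apply Rmult_le_compat_l; [apply Rabs_pos |].
      apply IHn, In_configs; auto.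
    + rewrite lsum_scalr. pose proof (Qmat_row_abs_le L x Hx). pose proof (pos_INR L).
      assert (0 < (2 * INR L + 1) ^ n) by (apply pow_lt; lra).
      apply Rmult_le_compat_r; lra.
Qed.

Definition Pt_coef L x s k := Qpow q L k x s / INR (fact k).

Lemma Pt_coef_radius L x s t : length x = L -> Rbar_lt (Rabs t) (CV_radius (Pt_coef L x s)).
Proof.
  intros Hx. set (B := 2 * INR L + 1). set (r := Rabs t + 1).
  assert (HB : 0 < B) by (unfold B; pose proof (pos_INR L); lra).
  assert (Hr : Rbar_le r (CV_radius (Pt_coef L x s))).
  { apply (proj1 (CV_radius_bounded (Pt_coef L x s))).
    destruct (maj_by_pos (fun n => (B * r) ^ n / INR (fact n))) as [K [_ HK]].
    { exists 0. apply cv_speed_pow_fact. }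
    exists K. intros n. eapply Rle_trans; [| apply (HK n)].
    unfold Pt_coef. pose proof (Qpow_abs_le L n x s Hx). fold B in H.
    assert (0 < INR (fact n)) by (apply lt_0_INR, lt_O_fact).
    assert (0 <= r) by (unfold r; pose proof (Rabs_pos t); lra).
    rewrite Rpow_mult_distr. unfold Rdiv.
    rewrite !Rabs_mult, Rabs_inv, (Rabs_right (INR (fact n))) by lra.
    rewrite (Rabs_right (B ^ n)) by (apply Rle_ge, pow_le; lra).
    assert (0 < / INR (fact n)) by (apply Rinv_0_lt_compat; auto).
    pose proof (Rabs_pos (r ^ n)).
    replace (B ^ n * Rabs (r ^ n) * / INR (fact n)) with (B ^ n * / INR (fact n) * Rabs (r ^ n))
      by ring.
    apply Rmult_le_compat_r; auto. apply Rmult_le_compat_r; lra. }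
  eapply Rbar_lt_le_trans; [| exact Hr]. simpl. unfold r. lra.
Qed.

Lemma Pt_coef_ex_pseries L x s t : length x = L -> ex_pseries (Pt_coef L x s) t.
Proof.
  intros Hx. apply ex_pseries_R, ex_series_Rabs, CV_disk_inside, Pt_coef_radius; auto.
Qed.

Lemma Pt_sum_cv_PSeries L x s t : length x = L ->
  Un_cv (fun N => sum_f_R0 (fun n => t ^ n / INR (fact n) * Qpow q L n x s) N)
        (PSeries (Pt_coef L x s) t).
Proof.
  intros Hx. pose proof (PSeries_correct _ _ (Pt_coef_ex_pseries L x s t Hx)) as H.
  apply is_pseries_R, is_series_Reals in H.
  intros e He. destruct (H e He) as [N HN]. exists N. intros n Hn.
  rewrite (sum_eq _ (fun k => Pt_coef L x s k * t ^ k)); [apply HN; auto |].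
  intros. unfold Pt_coef, Rdiv. ring.
Qed.

Lemma Pt_PSeries L t x s : length x = L -> Pt q L t x s = PSeries (Pt_coef L x s) t.
Proof.
  intros Hx. unfold Pt. eapply UL_sequence; [apply Lim_correct; eexists |];
    apply Pt_sum_cv_PSeries; auto.
Qed.

Lemma Pt_sum_cv L x s t : length x = L ->
  Un_cv (fun N => sum_f_R0 (fun n => t ^ n / INR (fact n) * Qpow q L n x s) N) (Pt q L t x s).
Proof. intros Hx. rewrite Pt_PSeries by auto. apply Pt_sum_cv_PSeries; auto. Qed.

Lemma Pt_0 L x s : length x = L -> Pt q L 0 x s = delta x s.
Proof.
  intros Hx. rewrite Pt_PSeries, PSeries_0 by auto. unfold Pt_coef, delta. simpl.
  unfold Rdiv. rewrite Rinv_1. ring.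
Qed.

Lemma PS_derive_Pt_coef L x s k : length x = L ->
  PS_derive (Pt_coef L x s) k = lsum (configs L) (fun u => Qmat q L x u * Pt_coef L u s k).
Proof.
  intros Hx. unfold PS_derive, Pt_coef. simpl Qpow. rewrite fact_simpl, mult_INR.
  assert (0 < INR (fact k)) by (apply lt_0_INR, lt_O_fact).
  assert (0 < INR (S k)) by (apply lt_0_INR; lia).
  rewrite (lsum_ext _ (fun u => Qmat q L x u * (Qpow q L k u s / INR (fact k)))
    (fun u => (Qmat q L x u * Qpow q L k u s) * / INR (fact k)))
    by (intros; unfold Rdiv; ring).
  rewrite lsum_scalr. field; lra.
Qed.

Lemma Pt_derive L x s t : length x = L ->
  is_derive (fun tau => Pt q L tau x s) t (Lgen q L (fun u => Pt q L t u s) x).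
Proof.
  intros Hx.
  apply (is_derive_ext (fun tau => PSeries (Pt_coef L x s) tau));
    [intros; rewrite Pt_PSeries; auto |].
  replace (Lgen q L (fun u => Pt q L t u s) x) with (PSeries (PS_derive (Pt_coef L x s)) t).
  { apply is_derive_PSeries, Pt_coef_radius; auto. }
  rewrite (PSeries_ext _ (fun k => lsum (configs L) (fun u => Qmat q L x u * Pt_coef L u s k)))
    by (intros; apply PS_derive_Pt_coef; auto).
  rewrite (proj2 (PSeries_lsum (configs L) (Qmat q L x) (fun u k => Pt_coef L u s k) t
    (fun u Hu => Pt_coef_ex_pseries L u s t (proj1 (In_configs L u) Hu)))).
  rewrite <- Qmat_apply by auto. apply lsum_ext; intros u Hu.
  rewrite Pt_PSeries; auto. apply In_configs; auto.
Qed.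

Definition Pt_apply L t g x := lsum (configs L) (fun s => Pt q L t x s * g s).

Lemma Pt_apply_0 L g x : length x = L -> Pt_apply L 0 g x = g x.
Proof.
  intros Hx. unfold Pt_apply. rewrite <- (lsum_configs_delta L x g Hx).
  apply lsum_ext; intros s Hs. rewrite Pt_0 by auto. reflexivity.
Qed.

Lemma Pt_apply_derive L g x t : length x = L ->
  is_derive (fun tau => Pt_apply L tau g x) t (Lgen q L (Pt_apply L t g) x).
Proof.
  intros Hx. unfold Pt_apply. rewrite Lgen_lsum.
  apply is_derive_lsum. intros s _.
  apply (is_derive_ext (fun tau => g s * Pt q L tau x s)); [intros; apply Rmult_comm |].
  rewrite (Lgen_ext L _ (fun u => g s * Pt q L t u s)), Lgen_scal by (auto; intros; ring).
  apply (is_derive_scal (fun tau => Pt q L tau x s)), Pt_derive; auto.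
Qed.

Lemma piE_derive L f df t : (forall x, length x = L -> is_derive (fun tau => f tau x) t (df x)) ->
  is_derive (fun tau => piE q L (f tau)) t (piE q L df).
Proof.
  intros H. unfold piE. apply is_derive_lsum. intros x Hx.
  apply (is_derive_scal (fun tau => f tau x)), H, In_configs; auto.
Qed.

Lemma piE_Pt_apply L g t : 0 <= t -> piE q L (Pt_apply L t g) = piE q L g.
Proof.
  intros Ht. rewrite <- (piE_ext L (Pt_apply L 0 g) g) by (intros; apply Pt_apply_0; auto).
  destruct Ht as [Ht | <-]; [| reflexivity].
  symmetry. apply (eq_is_derive (fun tau => piE q L (Pt_apply L tau g))); auto.
  intros tau _.
  pose proof (piE_derive L (fun tau => Pt_apply L tau g) _ tau
    (fun x Hx => Pt_apply_derive L g x tau Hx)) as H.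
  rewrite piE_Lgen in H. exact H.
Qed.

Lemma Var_Pt_apply_derive L g t :
  is_derive (fun tau => Defs.Var q L (Pt_apply L tau g)) t (- 2 * Dir q L (Pt_apply L t g)).
Proof.
  set (F := Pt_apply L t g). set (LF := Lgen q L F).
  assert (HF : forall x, length x = L -> is_derive (fun tau => Pt_apply L tau g x) t (LF x))
    by (intros; apply Pt_apply_derive; auto).
  replace (- 2 * Dir q L F) with
    (piE q L (fun x => LF x * F x + F x * LF x)
     - (piE q L LF * piE q L F + piE q L F * piE q L LF)).
  - apply (is_derive_minus (fun tau => piE q L (fun x => Pt_apply L tau g x * Pt_apply L tau g x))).
    + apply piE_derive. intros x Hx. apply (is_derive_mult (fun tau => Pt_apply L tau g x)); auto.
      intros; apply Rmult_comm.
    + apply (is_derive_mult (fun tau => piE q L (Pt_apply L tau g))); [apply piE_derive; auto .. |].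
      intros; apply Rmult_comm.
  - unfold LF. rewrite piE_Lgen. unfold Dir.
    rewrite (piE_ext L _ (fun x => 2 * (F x * Lgen q L F x))) by (intros; ring).
    rewrite piE_scal. ring.
Qed.

Lemma Var_Pt_apply_decay L C g t : 0 < C -> (forall f, Defs.Var q L f <= C * Dir q L f) ->
  0 <= t -> Defs.Var q L (Pt_apply L t g) <= Defs.Var q L g * exp (- (2 / C) * t).
Proof.
  intros HC HP Ht. set (k := 2 / C).
  set (chi := fun tau => Defs.Var q L (Pt_apply L tau g) * exp (k * tau)).
  assert (Hchi : chi t <= chi 0).
  { apply (is_derive_nonpos_antitone chi
      (fun tau => (- 2 * Dir q L (Pt_apply L tau g)) * exp (k * tau)
                  + Defs.Var q L (Pt_apply L tau g) * (k * exp (k * tau)))); auto.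
    - intros tau.
      apply (is_derive_mult (fun tau => Defs.Var q L (Pt_apply L tau g))
        (fun tau => exp (k * tau))).
      + apply Var_Pt_apply_derive.
      + auto_derive; [auto | ring].
      + intros; apply Rmult_comm.
    - intros tau. specialize (HP (Pt_apply L tau g)). pose proof (exp_pos (k * tau)).
      assert (k * Defs.Var q L (Pt_apply L tau g) <= 2 * Dir q L (Pt_apply L tau g)).
      { unfold k. apply (Rmult_le_reg_l (C / 2)); [lra |].
        replace (C / 2 * (2 / C * Defs.Var q L (Pt_apply L tau g)))
          with (Defs.Var q L (Pt_apply L tau g))
          by (field; lra). lra. }
      nra. }
  unfold chi in Hchi. rewrite Rmult_0_r, exp_0, Rmult_1_r in Hchi.
  rewrite (Var_ext L (Pt_apply L 0 g) g) in Hchi by (intros; apply Pt_apply_0; auto).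
  replace (- k * t) with (- (k * t)) by ring. rewrite exp_Ropp.
  pose proof (exp_pos (k * t)).
  apply (Rmult_le_reg_r (exp (k * t))); auto. rewrite Rmult_assoc, Rinv_l by lra. lra.
Qed.

(** * Mixing time *)

(* Against the sign test function g, the total variation distance is a
   deviation of P_t g, controlled by its variance through pi(eta) >= q^L. *)
Lemma dTV_sq_le_Var L t eta : 0 <= t -> length eta = L ->
  exists g, Defs.Var q L g <= 1 /\ q ^ L * (2 * dTV q L t eta) ^ 2 <= Defs.Var q L (Pt_apply L t g).
Proof.
  intros Ht Heta.
  set (g := fun s => if Rle_dec (piL q s) (Pt q L t eta s) then 1 else -1).
  set (F := Pt_apply L t g). exists g. split.
  - unfold Defs.Var. rewrite <- (piE_const L 1).
    assert (piE q L (fun s => g s * g s) <= piE q L (fun _ => 1))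
      by (apply piE_le; intros; unfold g; destruct (Rle_dec _ _); lra).
    pose proof (pow2_ge_0 (piE q L g)). lra.
  - replace (2 * dTV q L t eta) with (F eta - piE q L F).
    2:{ unfold dTV, F. rewrite piE_Pt_apply by auto. unfold Pt_apply, piE.
        rewrite <- lsum_minus. field_simplify. apply lsum_ext. intros s _. unfold g.
        destruct (Rle_dec (piL q s) (Pt q L t eta s)).
        - rewrite Rabs_right by lra. ring.
        - rewrite Rabs_left by lra. ring. }
    rewrite Var_centered, <- Heta at 1.
    eapply Rle_trans; [apply Rmult_le_compat_r; [apply pow2_ge_0 | apply piL_ge_pow] |].
    apply (lsum_ge_term _ (fun s => piL q s * (F s - piE q L F) ^ 2)); [apply In_configs; auto |].
    intros b _. apply Rmult_le_pos; [left; apply piL_pos | apply pow2_ge_0].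
Qed.

Lemma mixing_time_exists L :
  exists t, 0 <= t /\ forall eta, In eta (configs L) -> dTV q L t eta <= / 4.
Proof.
  destruct (poincare L) as [C [HC HP]].
  assert (HqL : 0 < q ^ L) by (apply pow_lt; lra).
  set (a := 4 / q ^ L). assert (Ha : 0 < a) by (apply Rdiv_lt_0_compat; lra).
  set (t := Rmax 0 (C / 2 * ln a)). assert (Ht : 0 <= t) by apply Rmax_l.
  exists t. split; auto. intros eta Heta. apply In_configs in Heta.
  assert (Hexp : exp (- (2 / C) * t) <= / a).
  { rewrite <- (exp_ln a Ha), <- exp_Ropp.
    assert (C / 2 * ln a <= t) by apply Rmax_r.
    assert (ln a <= 2 / C * t).
    { replace (ln a) with (2 / C * (C / 2 * ln a)) by (field; lra).
      apply Rmult_le_compat_l; [apply Rlt_le, Rdiv_lt_0_compat |]; lra. }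
    assert (Hle : - (2 / C) * t <= - ln a) by lra.
    destruct Hle as [Hlt | ->]; [left; apply exp_increasing, Hlt | lra]. }
  destruct (dTV_sq_le_Var L t eta Ht Heta) as [g [Hg HX]].
  pose proof (Var_Pt_apply_decay L C g t HC HP Ht).
  assert (Defs.Var q L g * exp (- (2 / C) * t) <= q ^ L / 4).
  { replace (q ^ L / 4) with (1 * / a) by (unfold a; field; lra).
    apply Rmult_le_compat; auto using Var_ge0; left; apply exp_pos. }
  assert (HX' : (2 * dTV q L t eta) ^ 2 <= / 4) by (apply (Rmult_le_reg_l (q ^ L)); [auto | lra]).
  assert (0 <= dTV q L t eta).
  { unfold dTV. apply Rmult_le_pos; [lra | apply lsum_ge0; intros; apply Rabs_pos]. }
  nra.
Qed.

Lemma Qmat_marginal L x u b : length x = L ->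
  Qmat q (S L) (x ++ [b]) (u ++ [false]) + Qmat q (S L) (x ++ [b]) (u ++ [true]) = Qmat q L x u.
Proof.
  intros Hx.
  change (Lgen q (S L) (fun v => delta v (u ++ [false])) (x ++ [b])
          + Lgen q (S L) (fun v => delta v (u ++ [true])) (x ++ [b])
          = Lgen q L (fun v => delta v u) x).
  rewrite <- (Rmult_1_l (Lgen _ _ (fun v => delta v (u ++ [false])) _)), <- Lgen_lin, Lgen_snoc
    by auto.
  rewrite (Lgen_ext L _ (fun v => delta v u))
    by (auto; intros; rewrite Rmult_1_l, delta_snoc_marginal; reflexivity).
  rewrite !Rmult_1_l, !delta_snoc_marginal. unfold Defs.p. ring.
Qed.

Lemma Qpow_marginal L n x s : length x = S L -> length s = L ->
  Qpow q (S L) n x (s ++ [false]) + Qpow q (S L) n x (s ++ [true]) = Qpow q L n (firstn L x) s.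
Proof.
  intros Hx Hs. destruct (snoc_decomp x L Hx) as [x' [b [-> Hx']]].
  rewrite <- Hx', firstn_snoc, Hx'. clear Hx. revert x' b Hx'.
  induction n; intros x' b Hx'.
  - exact (delta_snoc_marginal x' s b).
  - cbn [Qpow]. rewrite <- lsum_plus.
    rewrite (lsum_ext _ _ (fun u => Qmat q (S L) (x' ++ [b]) u * Qpow q L n (firstn L u) s)).
    2:{ intros u Hu. apply In_configs in Hu. destruct (snoc_decomp u L Hu) as [u' [c [-> Hu']]].
        rewrite <- Hu', firstn_snoc, Hu', <- (IHn u' c Hu'). ring. }
    rewrite lsum_configs_snoc. apply lsum_ext. intros u' Hu'. apply In_configs in Hu'.
    rewrite <- Hu', !firstn_snoc, Hu', <- (Qmat_marginal L x' u' b Hx'). ring.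
Qed.

Lemma Pt_marginal L t x s : length x = S L -> length s = L ->
  Pt q L t (firstn L x) s = Pt q (S L) t x (s ++ [false]) + Pt q (S L) t x (s ++ [true]).
Proof.
  intros Hx Hs.
  assert (Hx' : length (firstn L x) = L) by (rewrite length_firstn; lia).
  eapply UL_sequence; [apply (Pt_sum_cv L (firstn L x) s t Hx') |].
  apply (Un_cv_ext (fun N =>
    sum_f_R0 (fun n => t ^ n / INR (fact n) * Qpow q (S L) n x (s ++ [false])) N +
    sum_f_R0 (fun n => t ^ n / INR (fact n) * Qpow q (S L) n x (s ++ [true])) N)).
  - intros N. rewrite <- sum_plus. apply sum_eq. intros i _. rewrite <- Qpow_marginal by auto. ring.
  - apply CV_plus; apply Pt_sum_cv; auto.
Qed.

Lemma dTV_le_snoc L t eta : length eta = L -> dTV q L t eta <= dTV q (S L) t (eta ++ [false]).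
Proof.
  intros He. unfold dTV. apply Rmult_le_compat_l; [lra |].
  rewrite lsum_configs_snoc. apply lsum_le. intros s Hs. apply In_configs in Hs.
  assert (Hel : length (eta ++ [false]) = S L) by (rewrite length_app; simpl; lia).
  replace (Pt q L t eta s) with (Pt q L t (firstn L (eta ++ [false])) s)
    by (rewrite <- He, firstn_snoc; reflexivity).
  rewrite Pt_marginal by auto.
  replace (piL q s) with (piL q (s ++ [false]) + piL q (s ++ [true]))
    by (rewrite !piL_snoc; simpl; unfold Defs.p; ring).
  eapply Rle_trans; [| apply Rabs_triang]. right. f_equal. ring.
Qed.

Definition mixing_times L : R -> Prop :=
  fun t => 0 <= t /\ forall eta, In eta (configs L) -> dTV q L t eta <= / 4.

Lemma Tmix_le_succ L : Tmix q L <= Tmix q (S L).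
Proof.
  unfold Tmix. fold (mixing_times L) (mixing_times (S L)).
  apply Rinf_le.
  - destruct (mixing_time_exists L) as [t Ht]. exists t; auto.
  - exists 0. intros t [Ht _]. auto.
  - apply mixing_time_exists.
  - intros t [Ht H]. exists t. split; [| lra]. split; auto. intros eta Heta.
    apply In_configs in Heta. eapply Rle_trans; [apply dTV_le_snoc; auto |].
    apply H, In_configs. rewrite length_app. simpl. lia.
Qed.

End EastProcess.

Theorem mainTheorem6 (q : R) (hq0 : 0 < q) (hq1 : q < / 2) :
  (forall L : nat, (1 <= L)%nat -> Trel q L <= Trel q (S L)) /\
  (forall L : nat, (1 <= L)%nat -> Tmix q L <= Tmix q (S L)) /\
  (forall L : nat, (1 <= L)%nat -> Thit q L <= Thit q (S L)).
Proof.
  split; [| split]; intros L HL.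
  - apply Trel_le_succ; auto.
  - apply Tmix_le_succ; auto.
  - apply Thit_le_succ; auto.
Qed.
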